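(* Let $(S,+)$ be a semigroup with no idempotent element and of cardinality $\kappa>\omega$. Let $\mu$ be a cardinal with $\omega<\mu\le\kappa$ such that there is a family of $\lambda$ almost disjoint subsets of $\mu$, and let $A\subseteq S$ be an IP set with $|A|=\mu$. Then $A$ contains a family of $\lambda$ almost disjoint subsets each of which is an IP set.
   Context: For an infinite set $X$, a family $\mathcal{A}$ is a family of almost disjoint subsets of $X$ if each $B\in\mathcal{A}$ satisfies $B\subseteq X$ and $|B|=|X|$, and for distinct $B,C\in\mathcal{A}$, $|B\cap C|<|X|$. $e$ is idempotent if $e+e=e$. $A\subseteq S$ is an IP set if there is a sequence $\langle x_n\rangle_{n=1}^\infty$ in $S$ with all finite sums $\sum_{n\in H}x_n$ (increasing order, $H$ a nonempty finite subset of $\mathbb{N}$) in $A$. *)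

From mathcomp Require Import all_boot.
From mathcomp Require Import boolp classical_sets cardinality.
Set Implicit Arguments. Unset Strict Implicit. Unset Printing Implicit Defensive.
Local Open Scope classical_set_scope.
Local Open Scope card_scope.

Fixpoint fsum (S : Type) (add : S -> S -> S) (x : nat -> S) (h : nat)
    (t : seq nat) : S :=
  match t with
  | [::] => x h
  | h' :: t' => add (x h) (fsum add x h' t')
  end.

(* A nonempty finite H subset of nat is represented by its strictly increasing
   enumeration h :: t. *)
Definition IP_set (S : Type) (add : S -> S -> S) (A : set S) : Prop :=
  exists x : nat -> S,
    forall (h : nat) (t : seq nat), sorted ltn (h :: t) -> A (fsum add x h t).

Definition almost_disjoint_family (T I : Type) (X : set T) (F : I -> set T) :
    Prop :=
  injective F /\
  (forall i, F i `<=` X /\ F i #= X) /\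
  (forall i j, i <> j -> F i `&` F j #<= X /\ ~ (X #<= F i `&` F j)).

From mathcomp Require Import all_boot.
From mathcomp Require Import boolp classical_sets functions cardinality.

(* If x witnesses that A is an IP set, the set FS(x) of its finite sums is
   countable and contained in A.  Transport the almost disjoint family on mu
   into A along a bijection and add FS(x) to every member: every member is then
   an IP set, and pairwise intersections grow only by the countable FS(x),
   which cannot lift a set of size < |A| to size |A| because |A| = mu is
   uncountable. *)

Set Implicit Arguments.
Unset Strict Implicit.
Unset Printing Implicit Defensive.

Local Open Scope classical_set_scope.
Local Open Scope card_scope.

Lemma countable_setU T (A B : set T) :
  countable A -> countable B -> countable (A `|` B).
Proof.
by move=> cA cB; rewrite -bigcup2E; apply: bigcup_countable => // -[|[|i]] _.
Qed.

Lemma pcard_le_injfunP T (U : pointedType) (A : set T) (B : set U) :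
  A #<= B <->
  exists2 f : T -> U, {homo f : x / A x >-> B x} & {in A &, injective f}.
Proof.
split=> [/pcard_leP|/injfunPex/pcard_leP //].
by move=> /injfunPex.
Qed.

Lemma card_le_setU_disjoint T U (A1 A2 : set T) (B1 B2 : set U) :
  A1 #<= B1 -> A2 #<= B2 -> B1 `&` B2 = set0 -> A1 `|` A2 #<= B1 `|` B2.
Proof.
elim/Ppointed: U => U in B1 B2 *.
  by rewrite !emptyE => -> -> _; rewrite setU0.
move=> /pcard_le_injfunP[f1 f1B f1inj] /pcard_le_injfunP[f2 f2B f2inj] B12.
have B1B2 x y : B1 x -> B2 y -> x <> y.
  move=> B1x B2y xy; have : (B1 `&` B2) x by split; rewrite // xy.
  by rewrite B12.
have A2_of x : (A1 `|` A2) x -> ~ x \in A1 -> A2 x.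
  by case=> [/mem_set|] //.
apply/pcard_le_injfunP.
exists (fun z => if z \in A1 then f1 z else f2 z).
  move=> z A12z; case: ifPn => [/set_mem A1z|/negP A1z].
    by left; exact: f1B.
  by right; apply/f2B/A2_of.
move=> y z; rewrite !inE => A12y A12z.
case: ifPn => [/set_mem A1y|/negP/(A2_of _ A12y) A2y];
  case: ifPn => [/set_mem A1z|/negP/(A2_of _ A12z) A2z].
- by apply: f1inj; rewrite inE.
- by move/(B1B2 _ _ (f1B _ A1y) (f2B _ A2z)).
- by move/esym/(B1B2 _ _ (f1B _ A1z) (f2B _ A2y)).
- by apply: f2inj; rewrite inE.
Qed.

Lemma card_setU_countable_le T (Y C : set T) :
  infinite_set Y -> countable C -> Y `|` C #<= Y.
Proof.
elim/Ppointed: T => T in Y C *.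
  by move=> Yinf; exfalso; apply: Yinf; rewrite emptyE; exact: finite_set0.
(* A copy of nat inside Y absorbs C. *)
move=> /infiniteP/pcard_le_injfunP[e eY einj] Cc.
have RY : range e `<=` Y by move=> _ [n _ <-]; exact: eY.
have /card_eqPle[Rc natR] : range e #= [set: nat] by exact: inj_card_eq.
have -> : Y `|` C = (Y `\` range e) `|` (range e `|` C) by rewrite setUA setDKU.
rewrite -{2}(setDKU RY); apply: card_le_setU_disjoint.
- exact: card_lexx.
- exact: card_le_trans (countable_setU Rc Cc) natR.
- by rewrite setIC setDIK.
Qed.

Lemma card_le_setU_countable T U (X : set T) (Y C : set U) :
  ~ countable X -> countable C -> X #<= Y `|` C -> X #<= Y.
Proof.
move=> Xu Cc XYC; have Yinf : infinite_set Y.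
  move=> /finite_set_countable Yc.
  by apply/Xu/(sub_countable XYC)/countable_setU.
exact: card_le_trans XYC (card_setU_countable_le Yinf Cc).
Qed.

Lemma image_setI_inj T U (f : T -> U) (A B : set T) :
  injective f -> f @` (A `&` B) = f @` A `&` f @` B.
Proof.
move=> finj; apply/seteqP; split; first exact: sub_image_setI.
by move=> _ [[a Aa <-] [b Bb /finj ba]]; exists a => //; split; rewrite // -ba.
Qed.

Lemma almost_disjoint_family_image T U I (Y : set T) (F : I -> set T)
    (h : T -> U) :
  injective h -> almost_disjoint_family Y F ->
  almost_disjoint_family (h @` Y) (fun i => h @` F i).
Proof.
move=> hinj [Finj [FY Fdisj]].
have card_h (A : set T) : h @` A #= A by apply: inj_card_eq; exact: in2W.
have imageK (A : set T) : h @^-1` (h @` A) = A.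
  by apply: funext => x; exact: image_inj.
split; [|split].
- by move=> i j /(congr1 (preimage h)); rewrite !imageK => /Finj.
- move=> i; have [FiY FiYc] := FY i; split; first exact: image_subset.
  by rewrite (card_eql (card_h _)) (card_eqr (card_h _)).
- move=> i j ij; rewrite -image_setI_inj //.
  by rewrite !(card_le_eql (card_h _)) !(card_le_eqr (card_h _)); exact: Fdisj.
Qed.

Lemma almost_disjoint_family_setU_countable T I (X C : set T)
    (F : I -> set T) :
  ~ countable X -> countable C -> C `<=` X -> almost_disjoint_family X F ->
  almost_disjoint_family X (fun i => C `|` F i).
Proof.
move=> Xu Cc CX [Finj [FX Fdisj]].
have CF_sub i : C `|` F i `<=` X by move=> x [/CX|/(FX i).1].
have X_le_CF i : X #<= C `|` F i.
  have [_ /card_eqPle[_ X_le_Fi]] := FX i.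
  exact: card_le_trans X_le_Fi (subset_card_le (@subsetUr _ _ _)).
have meet_small i j : X #<= (C `|` F i) `&` (C `|` F j) -> i = j.
  move=> XCF; apply: contrapT => ij; apply: (Fdisj i j ij).2.
  by apply: (card_le_setU_countable Xu Cc); rewrite setUC setUIr.
split; [|split].
- by move=> i j CFij; apply: meet_small; rewrite CFij setIid.
- move=> i; split; first exact: CF_sub.
  by apply/card_eqPle; split; [exact: subset_card_le|exact: X_le_CF].
- move=> i j ij; split; last by move/meet_small.
  by apply: subset_card_le => x [/CF_sub].
Qed.

Lemma card_eqT_range T U (A : set U) :
  A #= [set: T] -> exists2 h : T -> U, injective h & A = range h.
Proof.
elim/Ppointed: U => U in A *.
  rewrite emptyE => /eqP T0.
  have noT (t : T) : False by rewrite -[False]/(set0 t) -T0.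
  exists (fun t => match noT t with end) => [t|]; first by case: (noT t).
  by apply/seteqP; split=> u; case: (no u).
rewrite card_eq_sym => /card_set_bijP[h [hA /in2TT hinj hsurj]].
exists h => //; apply/seteqP; split=> [//|_ [t _ <-]]; exact: hA.
Qed.

Definition finite_sums S (add : S -> S -> S) (x : nat -> S) : set S :=
  [set fsum add x p.1 p.2
  | p in [set p : nat * seq nat | sorted ltn (p.1 :: p.2)]].

Lemma IP_setE S (add : S -> S -> S) (A : set S) :
  IP_set add A <-> exists x, finite_sums add x `<=` A.
Proof.
split=> -[x Ax]; exists x; first by move=> _ [[h t] /= ht <-]; exact: Ax.
by move=> h t ht; apply: Ax; exists (h, t).
Qed.

Lemma countable_finite_sums S (add : S -> S -> S) (x : nat -> S) :
  countable (finite_sums add x).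
Proof. exact: sub_countable (card_image_le _ _) (countableP _). Qed.

Theorem theorem2p8 (S : Type) (add : S -> S -> S)
  (add_assoc : associative add)
  (no_idem : forall e : S, add e e <> e)
  (S_uncountable : ~ countable [set: S])
  (M L : Type)
  (M_uncountable : ~ countable [set: M])
  (M_le_S : [set: M] #<= [set: S])
  (F : L -> set M)
  (F_ad : almost_disjoint_family [set: M] F)
  (A : set S)
  (A_IP : IP_set add A)
  (A_card : A #= [set: M]) :
  exists G : L -> set S,
    almost_disjoint_family A G /\ (forall l, IP_set add (G l)).
Proof.
move: A_IP => /IP_setE[x FS_A].
have A_uncountable : ~ countable A by rewrite (eq_countable A_card).
have [h hinj A_range] := card_eqT_range A_card.
exists (fun l => finite_sums add x `|` h @` F l); split.
  apply: almost_disjoint_family_setU_countable => //.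
    exact: countable_finite_sums.
  by rewrite A_range; exact: almost_disjoint_family_image.
by move=> l; apply/IP_setE; exists x; exact: subsetUl.
Qed.
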